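(* There exists an absolute constant $c>0$ such that the following holds. Let $G$ be an abelian group and let $A\subseteq G$ be a finite nonempty set with $|A|=n$ and $|A-A|=\kappa n$. Then for each integer $s\ge1$ there exists a subset $A_{(s)}\subseteq A$ with $|A_{(s)}|\le s$ such that \[ |A-A_{(s)}|\ge c\min(\kappa^{1/2},s)\,|A|. \]
   Context: For subsets $X,Y$ of an abelian group, $X-Y=\{x-y:x\in X,y\in Y\}$. *)

From Stdlib Require Import Reals.
From HB Require Import structures.
From mathcomp Require Import all_boot all_algebra.
From mathcomp Require Import finmap.
Set Implicit Arguments. Unset Strict Implicit. Unset Printing Implicit Defensive.
Import GRing.Theory.
Local Open Scope fset_scope.
Local Open Scope ring_scope.

Definition diffset (G : zmodType) (X Y : {fset G}) : {fset G} :=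
  [fset (x - y)%R | x in X, y in Y].

From Stdlib Require Import Reals Lia Lra.
From HB Require Import structures.
From mathcomp Require Import all_boot all_algebra.
From mathcomp Require Import finmap zify.
Set Implicit Arguments. Unset Strict Implicit. Unset Printing Implicit Defensive.
Import GRing.Theory.
Local Open Scope fset_scope.

(* Take j maximal with j^2 |A| <= |A - A|, so that sqrt kappa < j + 1 <= 2 j.
   By induction on m <= j there is B in A with |B| <= m and 3 |A - B| >= m |A|;
   take m = min(s, j). In the step, if some b in A has a - b in A - B for
   fewer than two thirds of the a in A, adding b to B creates more than |A|/3
   new differences. Otherwise any two such b share a third of their a, so every
   d in A - A has |A|/3 representations in (A - B) - (A - B); hence
   |A - A| |A| <= 3 |A - B|^2, contradicting 3 |A - B| < (m + 1) |A| and
   (m + 1)^2 |A| <= |A - A|. *)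

Lemma sum_nat_const_fset (T : choiceType) (D : {fset T}) (k : nat) :
  (\sum_(d <- D) k = #|` D| * k)%N.
Proof. by rewrite big_const_seq count_predT iter_addn_0 mulnC. Qed.

Lemma card_fset_sep_sum (T : choiceType) (X : {fset T}) (P : pred T) :
  #|` [fset x in X | P x]| = (\sum_(x <- X) P x)%N.
Proof.
rewrite card_fset_sum1 -big_fset_condE big_mkcond /=.
by apply: eq_bigr => x _; case: (P x).
Qed.

Section DifferenceSets.
Variable G : zmodType.
Implicit Types (A B X Y : {fset G}) (b d x : G).

Lemma diffsetP X Y z :
  reflect (exists x y, [/\ x \in X, y \in Y & z = (x - y)%R]) (z \in diffset X Y).
Proof.
apply: (iffP (imfset2P _ _ _ _ _)).
  by move=> [x xX [y yY ->]]; exists x, y.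
by move=> [x [y [xX yY ->]]]; exists x => //; exists y.
Qed.

Lemma mem_diffset X Y x y : x \in X -> y \in Y -> (x - y)%R \in diffset X Y.
Proof. by move=> xX yY; apply/diffsetP; exists x, y. Qed.

Lemma card_translate A b : #|` [fset (a - b)%R | a in A]| = #|` A|.
Proof. by rewrite card_imfset //= => x y /addIr. Qed.

Lemma card_reflect A x : #|` [fset (x - a)%R | a in A]| = #|` A|.
Proof. by rewrite card_imfset //= => u v /addrI /oppr_inj. Qed.

Lemma card_le_diffset A : A != fset0 -> (#|` A| <= #|` diffset A A|)%N.
Proof.
case/fset0Pn=> a0 a0A; rewrite -(card_translate A a0).
by apply: fsubset_leq_card; apply/fsubsetP=> _ /imfsetP [a /= aA ->]; apply: mem_diffset.
Qed.

(* [diff_reps X d] indexes the representations d = x - (x - d) of d in X - X. *)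
Definition diff_reps X d : {fset G} := [fset x in X | (x - d)%R \in X].

Definition hits A X b : {fset G} := [fset a in A | (a - b)%R \in X].

Lemma sum_card_diff_reps_le (D X : {fset G}) :
  (\sum_(d <- D) #|` diff_reps X d| <= #|` X| * #|` X|)%N.
Proof.
under eq_bigr => d _ do rewrite card_fset_sep_sum.
rewrite exchange_big /= -sum_nat_const_fset big_seq [leqRHS]big_seq.
apply: leq_sum => x xX; rewrite -card_fset_sep_sum -(card_reflect _ x).
apply: fsubset_leq_card; apply/fsubsetP => _ /imfsetP [d /= + ->].
by rewrite inE => /andP [].
Qed.

Lemma card_hitsI_le A X b1 b2 :
  (#|` hits A X b1 `&` hits A X b2| <= #|` diff_reps X (b1 - b2)%R|)%N.
Proof.
rewrite -(card_translate _ b2); apply: fsubset_leq_card.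
apply/fsubsetP => _ /imfsetP [a /= + ->].
rewrite in_fsetI !in_fset /= !inE => /andP [/andP [_ ab1] /andP [_ ab2]].
by rewrite ab2 /= opprB addrA subrK.
Qed.

Lemma card_diffset_mul_le A X :
  (forall b, b \in A -> 2 * #|` A| <= 3 * #|` hits A X b|)%N ->
  (#|` diffset A A| * #|` A| <= 3 * (#|` X| * #|` X|))%N.
Proof.
move=> dense.
have reps_ge d : d \in diffset A A -> (#|` A| <= 3 * #|` diff_reps X d|)%N.
  case/diffsetP=> b1 [b2 [b1A b2A ->]].
  have := dense _ b1A; have := dense _ b2A; have := card_hitsI_le A X b1 b2.
  have := cardfsUI (hits A X b1) (hits A X b2).
  have : (#|` hits A X b1 `|` hits A X b2| <= #|` A|)%N.
    apply: fsubset_leq_card; apply/fsubsetP => x.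
    by rewrite in_fsetU !in_fset /= !inE => /orP [/andP [] | /andP []].
  lia.
rewrite -sum_nat_const_fset.
apply: leq_trans (_ : (\sum_(d <- diffset A A) 3 * #|` diff_reps X d| <= _)%N).
  by rewrite big_seq [leqRHS]big_seq; apply: leq_sum.
by rewrite -big_distrr leq_mul2l sum_card_diff_reps_le orbT.
Qed.

Lemma hits_sub A X b : hits A X b `<=` A.
Proof. by apply/fsubsetP => a; rewrite inE => /andP []. Qed.

Lemma card_diffset_fset1U A B b :
  (#|` diffset A B| + #|` A `\` hits A (diffset A B) b| <= #|` diffset A (b |` B)|)%N.
Proof.
set X := diffset A B; set Z := [fset (a - b)%R | a in A `\` hits A X b].
have disjXZ : X `&` Z = fset0.
  apply/fsetP => y; rewrite in_fsetI in_fset0.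
  apply/negbTE/andP => -[yX /imfsetP [a /= + ey]].
  by rewrite in_fsetD !inE -ey yX andbT => /andP [/negP].
have subXZ : X `|` Z `<=` diffset A (b |` B).
  apply/fsubsetP => y /fsetUP [/diffsetP [a [c [aA cB ->]]] | /imfsetP [a /= + ->]].
    by apply: mem_diffset => //; rewrite in_fset1U cB orbT.
  by rewrite in_fsetD => /andP [_ aA]; apply: mem_diffset; rewrite ?in_fset1U ?eqxx.
rewrite -(card_translate (A `\` hits A X b) b) -/Z; apply: leq_trans (fsubset_leq_card subXZ).
by rewrite -cardfsUI disjXZ cardfs0 addn0.
Qed.

Lemma greedy_subset A j :
  (j * j * #|` A| <= #|` diffset A A|)%N ->
  exists B, [/\ B `<=` A, (#|` B| <= j)%N & (j * #|` A| <= 3 * #|` diffset A B|)%N].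
Proof.
elim: j => [|j IHj] hj; first by exists fset0; rewrite fsub0set.
have [|B [BA cardB growB]] := IHj.
  by apply: leq_trans hj; rewrite leq_mul2r leq_mul ?orbT.
set X := diffset A B in growB *.
have [doneB|] := leqP (j.+1 * #|` A|) (3 * #|` X|).
  by exists B; split => //; apply: ltnW.
move=> smallX.
have [/hasP [b bA sparse_b]|/hasPn dense] :=
  boolP (has (fun b => 3 * #|` hits A X b| < 2 * #|` A|)%N A).
- exists (b |` B); split.
  + by rewrite fsubUset fsub1set bA.
  + by rewrite cardfsU1 -add1n leq_add // leq_b1.
  + have := card_diffset_fset1U A B b; rewrite (cardfsDS (hits_sub A X b)) -/X.
    have := fsubset_leq_card (hits_sub A X b); lia.
- have: (#|` diffset A A| * #|` A| <= 3 * (#|` X| * #|` X|))%N.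
    by apply: card_diffset_mul_le => b /dense; rewrite -leqNgt.
  nia.
Qed.

End DifferenceSets.

Lemma exists_square_bracket (n K : nat) : (0 < n)%N -> (n <= K)%N ->
  exists j, [/\ (0 < j)%N, (j * j * n <= K)%N & (K < j.+1 * j.+1 * n)%N].
Proof.
move=> n_gt0 nK.
have exP : exists j, (j * j * n <= K)%N by exists 1%N; rewrite !mul1n.
have ubP j : (j * j * n <= K)%N -> (j <= K)%N.
  by apply: leq_trans; case: j => // j; rewrite -mulnA leq_pmulr // muln_gt0 n_gt0.
have [j jK jmax] := ex_maxnP exP ubP.
exists j; split => //; first by apply: jmax; rewrite !mul1n.
by rewrite ltnNge; apply/negP => /jmax; rewrite ltnn.
Qed.

Section RealBounds.
Local Open Scope R_scope.

Lemma Rmin_sqrt_le_double (K n j s : nat) :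
  (0 < n)%N -> (0 < j)%N -> (K < j.+1 * j.+1 * n)%N ->
  Rmin (sqrt (INR K / INR n)) (INR s) <= 2 * INR (minn s j).
Proof.
move=> n_gt0 j_gt0 Kj.
have [_|_] := leqP s j.
  have := pos_INR s; have := Rmin_r (sqrt (INR K / INR n)) (INR s).
  lra.
have n_pos : 0 < INR n by apply: lt_0_INR; apply/ltP.
have j_ge1 : 1 <= INR j by apply: (le_INR 1); apply/leP.
have kappa_le : INR K / INR n <= (INR j + 1) * (INR j + 1).
  apply: (Rmult_le_reg_r (INR n)) => //.
  rewrite /Rdiv Rmult_assoc Rinv_l ?Rmult_1_r; last by apply: Rgt_not_eq.
  rewrite -S_INR -!mult_INR; apply: le_INR; apply/leP; exact: ltnW.
have : sqrt (INR K / INR n) <= INR j + 1.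
  by rewrite -(sqrt_square (INR j + 1)); [apply: sqrt_le_1_alt | lra].
have := Rmin_l (sqrt (INR K / INR n)) (INR s); lra.
Qed.

Lemma sixth_Rmin_sqrt_le (K n j s Y : nat) :
  (0 < n)%N -> (0 < j)%N -> (K < j.+1 * j.+1 * n)%N -> (minn s j * n <= 3 * Y)%N ->
  1 / 6 * Rmin (sqrt (INR K / INR n)) (INR s) * INR n <= INR Y.
Proof.
move=> n_gt0 j_gt0 Kj /leP /le_INR; rewrite !mult_INR.
have := Rmult_le_compat_r _ _ _ (pos_INR n) (Rmin_sqrt_le_double s n_gt0 j_gt0 Kj).
rewrite [INR 3]/=; lra.
Qed.

End RealBounds.

Theorem proposition2p3 :
  exists c : R, Rlt 0 c /\
  forall (G : zmodType) (A : {fset G}), A != fset0 ->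
  let n := #|` A| in
  let kappa := Rdiv (INR #|` diffset A A|) (INR n) in
  forall s : nat, (1 <= s)%N ->
  exists As : {fset G}, As `<=` A /\ (#|` As| <= s)%N /\
    Rle (Rmult (Rmult c (Rmin (sqrt kappa) (INR s))) (INR n))
        (INR #|` diffset A As|).
Proof.
exists (Rdiv 1 6); split; first lra.
move=> G A A0 n kappa s _.
have n_gt0 : (0 < n)%N by rewrite cardfs_gt0.
have [j [j_gt0 jK Kj]] := exists_square_bracket n_gt0 (card_le_diffset A0).
have [|B [BA cardB growB]] := @greedy_subset G A (minn s j).
  by apply: leq_trans jK; rewrite leq_mul2r leq_mul ?geq_minr ?orbT.
exists B; split => //; split; first exact: leq_trans cardB (geq_minl _ _).
exact: sixth_Rmin_sqrt_le n_gt0 j_gt0 Kj growB.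
Qed.
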